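(* Under the standing setting and assumptions (A1)–(A3) described in the context, the following are equivalent: (a) $\mathcal R(X)\neq\emptyset$ for every $X\in\mathcal X$; (b) $\mathcal R(X)\neq\emptyset$ for every $X\in\partial(\mathcal A+\ker(\pi))$; (c) $\mathcal A+\ker(\pi)$ is closed.
   Context: Let $\mathcal X$ be a Hausdorff, first countable, locally convex topological vector space over $\mathbb R$, partially ordered by a partial order $\geq$ with positive cone $\mathcal X_+=\{X\in\mathcal X: X\geq 0\}$. Let $\mathcal M\subset\mathcal X$ be a vector subspace with $1<\dim\mathcal M<\infty$, carrying the relative topology, and let $\pi:\mathcal M\to\mathbb R$ be linear with $\ker(\pi)=\{Z\in\mathcal M:\pi(Z)=0\}$. Standing assumptions: (A1) there is $U\in\mathcal M\cap\mathcal X_+$ with $\pi(U)=1$; (A2) $\mathcal A\subsetneq\mathcal X$ is closed, contains $0$, and satisfies $\mathcal A+\mathcal X_+\subset\mathcal A$; (A3) the map $\rho(X)=\inf\{\pi(Z): Z\in\mathcal M,\ X+Z\in\mathcal A\}$ is finitely valued and continuous on $\mathcal X$. The optimal payoff map is $\mathcal R(X)=\{Z\in\mathcal M: X+Z\in\mathcal A,\ \pi(Z)=\rho(X)\}$. $\partial$ denotes boundary in $\mathcal X$. *)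

From HB Require Import structures.
From mathcomp Require Import all_boot all_order all_algebra.
From mathcomp Require Import all_classical all_reals all_analysis.
Set Implicit Arguments.
Unset Strict Implicit.
Unset Printing Implicit Defensive.
Import Order.TTheory GRing.Theory Num.Theory.
Local Open Scope classical_set_scope.
Local Open Scope ring_scope.

Definition first_countable (T : topologicalType) : Prop :=
  forall x : T, exists B : set_system T,
    [/\ countable B, (forall V, B V -> nbhs x V) &
        (forall U, nbhs x U -> exists2 V, B V & V `<=` U)].

Definition boundary (T : topologicalType) (S : set T) : set T :=
  closure S `\` interior S.

Definition mink_sum (V : zmodType) (A B : set V) : set V :=
  [set a + b | a in A & b in B].

Definition ordered_vector_space (R : numDomainType) (V : lmodType R)
  (le : V -> V -> Prop) : Prop :=
  [/\ (forall x, le x x),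
      (forall x y, le x y -> le y x -> x = y),
      (forall x y z, le x y -> le y z -> le x z),
      (forall x y z, le x y -> le (x + z) (y + z)) &
      (forall (a : R) x y, 0 <= a -> le x y -> le (a *: x) (a *: y))].

Definition pos_cone (R : numDomainType) (V : lmodType R)
  (le : V -> V -> Prop) : set V := [set x | le 0 x].

Definition is_subspace (R : numDomainType) (V : lmodType R) (M : set V) : Prop :=
  [/\ M 0, (forall x y, M x -> M y -> M (x + y)) &
      (forall (a : R) x, M x -> M (a *: x))].

Definition has_dim (R : numDomainType) (V : lmodType R) (M : set V) (n : nat) : Prop :=
  exists b : 'I_n -> V,
    (forall c : 'I_n -> R, \sum_(i < n) c i *: b i = 0 -> forall i, c i = 0) /\
    M = [set x | exists c : 'I_n -> R, x = \sum_(i < n) c i *: b i].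

Definition linear_on (R : numDomainType) (V : lmodType R) (M : set V) (pi : V -> R) : Prop :=
  (forall x y, M x -> M y -> pi (x + y) = pi x + pi y) /\
  (forall (a : R) x, M x -> pi (a *: x) = a * pi x).

Definition kerM (R : numDomainType) (V : lmodType R) (M : set V) (pi : V -> R) : set V :=
  [set z | M z /\ pi z = 0].

Definition rho (R : realType) (V : lmodType R) (M A : set V) (pi : V -> R) (x : V)
  : \bar R :=
  ereal_inf [set (pi z)%:E | z in [set z | M z /\ A (x + z)]].

Definition optimal_payoffs (R : realType) (V : lmodType R) (M A : set V) (pi : V -> R)
  (x : V) : set V :=
  [set z | [/\ M z, A (x + z) & (pi z)%:E = rho M A pi x]].

From HB Require Import structures.
From mathcomp Require Import all_boot all_order all_algebra.
From mathcomp Require Import all_classical all_reals all_analysis.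
Set Implicit Arguments.
Unset Strict Implicit.
Unset Printing Implicit Defensive.
Import Order.TTheory GRing.Theory Num.Theory.
Local Open Scope classical_set_scope.
Local Open Scope ring_scope.

(* Write K = A + ker(pi). As A is upward closed and U >= 0 lies in M with
   pi(U) = 1, X + tU is in K iff some Z in M with X + Z in A has pi(Z) <= t.
   Hence R(X) is nonempty iff X + rho(X)U is in K, and K lies in {rho <= 0}.
   If K is closed, X + rho(X)U is in K as the limit of X + tU for t > rho(X)
   tending to rho(X). Conversely, by continuity of rho the closure of K lies in
   {rho <= 0}; a boundary point X with R(X) nonempty then has X + rho(X)U in K
   with rho(X) <= 0, so X is in K, while interior points are in K anyway. *)

Lemma line_continuous (R : realType) (X : tvsType R) (x u : X) :
  continuous (fun t : R^o => x + t *: u).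
Proof.
move=> t.
have pair_u : {for t, continuous (fun s : R^o => (s, u))}.
  exact: (cvg_pair cvg_id (cvg_cst u)).
have scale_u := continuous_comp pair_u (@scale_continuous R X (t, u)).
have pair_x : {for t, continuous (fun s : R^o => (x, s *: u))}.
  exact: (cvg_pair (cvg_cst x) scale_u).
exact: (continuous_comp pair_x (@add_continuous X (x, t *: u))).
Qed.

Lemma subspaceN (R : numDomainType) (V : lmodType R) (M : set V) (z : V) :
  is_subspace M -> M z -> M (- z).
Proof. by move=> [_ _ MZ] Mz; rewrite -scaleN1r; apply: MZ. Qed.

Lemma rho_le (R : realType) (V : lmodType R) (M A : set V) (pi : V -> R) (x z : V) :
  M z -> A (x + z) -> (rho M A pi x <= (pi z)%:E)%E.
Proof. by move=> Mz Axz; apply: ereal_inf_lbound; exists z. Qed.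

Section AcceptanceSetPlusKernel.
Variables (R : realType) (X : tvsType R) (le : X -> X -> Prop).
Variables (M A : set X) (pi : X -> R) (U : X).
Hypotheses (leX : ordered_vector_space le) (subM : is_subspace M).
Hypotheses (linpi : linear_on M pi) (MU : M U) (U_ge0 : pos_cone le U).
Hypotheses (piU : pi U = 1) (A_upward : mink_sum A (pos_cone le) `<=` A).

Local Notation AK := (mink_sum A (kerM M pi)).

Lemma mink_sum_kerM_translateP (x : X) (t : R) :
  AK (x + t *: U) <-> exists z, [/\ M z, A (x + z) & pi z <= t].
Proof.
have [_ MD MZ] := subM; have [piD piZ] := linpi.
have sU_subP s z : M z -> M (s *: U - z) /\ pi (s *: U - z) = s - pi z.
  move=> Mz; have MNz := subspaceN subM Mz; have MsU := MZ s U MU.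
  split; first exact: MD.
  by rewrite piD // piZ // piU mulr1 -[- z]scaleN1r piZ // mulN1r.
split=> [[a Aa [k [Mk pik] xtU]]|[z [Mz Axz pizt]]].
  have [Mk' pik'] := sU_subP t k Mk.
  exists (t *: U - k); split=> //; first by rewrite addrA -xtU addrK.
  by rewrite pik' pik subr0.
case: leX => _ _ _ _ leZ; have [Mz' piz'] := sU_subP (pi z) z Mz.
exists (x + z + (t - pi z) *: U).
  apply: A_upward; exists (x + z) => //; exists ((t - pi z) *: U) => //.
  by rewrite /pos_cone -(scaler0 _ (t - pi z)); apply: leZ; rewrite ?subr_ge0.
exists (pi z *: U - z); first by split=> //; rewrite piz' subrr.
by rewrite scalerBl -!addrA; congr (_ + _); rewrite addKr addrC subrK.
Qed.

Lemma mink_sum_kerM_translate_le (x : X) (s t : R) :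
  s <= t -> AK (x + s *: U) -> AK (x + t *: U).
Proof.
move=> st /mink_sum_kerM_translateP [z [Mz Axz piz]].
by apply/mink_sum_kerM_translateP; exists z; split=> //; exact: le_trans st.
Qed.

Lemma rho_le0_mink_sum (x : X) : AK x -> (rho M A pi x <= 0)%E.
Proof.
move=> AKx; have /mink_sum_kerM_translateP [z [Mz Axz piz]] : AK (x + 0 *: U).
  by rewrite scale0r addr0.
by apply: le_trans (rho_le pi Mz Axz) _; rewrite lee_fin.
Qed.

Hypothesis rho_fin : forall x, rho M A pi x \is a fin_num.

Local Notation rhoR x := (fine (rho M A pi x)).

Lemma optimal_payoffsP (x : X) :
  optimal_payoffs M A pi x !=set0 <-> AK (x + rhoR x *: U).
Proof.
split=> [[z [Mz Axz piz]]|/mink_sum_kerM_translateP [z [Mz Axz piz]]].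
  by apply/mink_sum_kerM_translateP; exists z; rewrite -lee_fin piz fineK.
exists z; split=> //; apply/le_anti/andP; split; last exact: rho_le.
by rewrite -(fineK (rho_fin x)) lee_fin.
Qed.

Lemma optimal_payoffs_of_closed :
  closed AK -> forall x, optimal_payoffs M A pi x !=set0.
Proof.
move=> clAK x; apply/optimal_payoffsP.
apply: (@closed_cvg _ _ (rhoR x)^'+ _ (fun t : R => x + t *: U) _ clAK); last first.
  by apply: cvg_within_filter; exact: line_continuous.
near=> t.
have : (rho M A pi x < t%:E)%E.
  by rewrite -(fineK (rho_fin x)) lte_fin; near: t; exact: nbhs_right_gt.
move=> /ereal_inf_lt [_ [z [Mz Axz] <-]]; rewrite lte_fin => /ltW pizt.
by apply/mink_sum_kerM_translateP; exists z.
Unshelve. all: by end_near.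
Qed.

Hypothesis rho_cont : continuous (fun x : X => rhoR x : R^o).

Lemma closure_mink_sum_kerM_rho_le0 : closure AK `<=` [set x | rhoR x <= 0].
Proof.
have cl_le0 : closed ((fun x => rhoR x : R^o) @^-1` [set r : R | r <= 0]).
  by apply: preimage_closed; [move=> x _; apply: rho_cont | exact: closed_le].
have AK_le0 : AK `<=` (fun x => rhoR x : R^o) @^-1` [set r : R | r <= 0].
  by move=> x /rho_le0_mink_sum; rewrite /= -lee_fin fineK.
by move=> x /(closureS AK_le0) /cl_le0.
Qed.

Lemma closed_mink_sum_kerM_of_boundary :
  (forall x, boundary AK x -> optimal_payoffs M A pi x !=set0) -> closed AK.
Proof.
move=> opt_bd x clx.
have [/interior_subset //|xNint] := pselect (interior AK x).
have rho_le0 : rhoR x <= 0 := closure_mink_sum_kerM_rho_le0 clx.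
have := mink_sum_kerM_translate_le (x := x) rho_le0; rewrite scale0r addr0.
by apply; apply/optimal_payoffsP; exact: opt_bd.
Qed.

End AcceptanceSetPlusKernel.

Theorem mainTheorem7 (R : realType) (X : tvsType R) (le : X -> X -> Prop)
  (M : set X) (n : nat) (pi : X -> R) (A : set X) :
  hausdorff_space X -> first_countable X ->
  ordered_vector_space le ->
  is_subspace M -> has_dim M n -> (1 < n)%N ->
  linear_on M pi ->
  (* (A1) *)
  (exists U, [/\ M U, pos_cone le U & pi U = 1]) ->
  (* (A2) *)
  closed A -> A 0 -> ~ (A = setT) -> mink_sum A (pos_cone le) `<=` A ->
  (* (A3) *)
  (forall x, rho M A pi x \is a fin_num) ->
  continuous (fun x : X => (fine (rho M A pi x) : R^o)) ->
  [<-> (forall x, optimal_payoffs M A pi x !=set0);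
       (forall x, boundary (mink_sum A (kerM M pi)) x -> optimal_payoffs M A pi x !=set0);
       closed (mink_sum A (kerM M pi))].
Proof.
move=> _ _ leX subM _ _ linpi [U [MU U_ge0 piU]] _ _ _ A_upward rho_fin rho_cont.
tfae.
- by move=> opt x _; exact: opt.
- exact: (closed_mink_sum_kerM_of_boundary leX subM linpi MU U_ge0 piU A_upward
    rho_fin rho_cont).
- exact: (optimal_payoffs_of_closed leX subM linpi MU U_ge0 piU A_upward rho_fin).
Qed.
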